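(* Let $n\ge1$, $D\ge1$, $r=\lceil\sqrt n\rceil$, and let $X_n=\{\mathbf{x}^0,\ldots,\mathbf{x}^{n-1}\}\subseteq\{0,1\}^D$ consist of $n$ pairwise distinct vectors, indexed so that $\mathbf{a}\cdot\mathbf{x}^0<\cdots<\mathbf{a}\cdot\mathbf{x}^{n-1}$ for some $\mathbf{a}\in\mathbb{Z}^D$. Then there is a five-layer Boolean threshold network with layer sizes $D$, $r+D$, $2r$, $rD$, $D$ that is a perfect autoencoder for $X_n$, with the third layer (of size $2r$) as middle layer.
   Context: A Boolean threshold function is a map $\{0,1\}^h\to\{0,1\}$, $\mathbf{u}\mapsto[\mathbf{w}\cdot\mathbf{u}\ge\theta]$ (value $1$ iff $\mathbf{w}\cdot\mathbf{u}\ge\theta$) with $\mathbf{w}\in\mathbb{Z}^h,\theta\in\mathbb{Z}$. An $L$-layer Boolean threshold network has layers $1,\ldots,L$; layer $1$ is the input; each node of layer $t+1$ computes a Boolean threshold function of the values of layer $t$. If layer $k$ is designated the middle layer, the encoder $\mathbf{f}$ is the map from layer $1$ values to layer $k$ values and the decoder $\mathbf{g}$ the map from layer $k$ values to layer $L$ values; the network is a perfect autoencoder for $X_n$ if $\mathbf{g}(\mathbf{f}(\mathbf{x}^i))=\mathbf{x}^i$ for all $i$. *)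

From mathcomp Require Import all_boot all_order all_algebra.
Set Implicit Arguments. Unset Strict Implicit. Unset Printing Implicit Defensive.
Import Order.TTheory GRing.Theory Num.Theory.
Local Open Scope ring_scope.

Definition bvec (h : nat) := 'I_h -> bool.

Definition bdot (h : nat) (w : 'I_h -> int) (u : bvec h) : int :=
  \sum_(i < h) w i * (nat_of_bool (u i))%:Z.

Definition threshold_fun (h : nat) (w : 'I_h -> int) (theta : int) (u : bvec h) : bool :=
  theta <= bdot w u.

Definition threshold_layer (h h' : nat) (F : bvec h -> bvec h') : Prop :=
  exists (W : 'I_h' -> 'I_h -> int) (Theta : 'I_h' -> int),
    forall (u : bvec h) (j : 'I_h'), F u j = threshold_fun (W j) (Theta j) u.

From mathcomp Require Import all_boot all_order all_algebra.
Import Order.TTheory GRing.Theory Num.Theory.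
Set Implicit Arguments. Unset Strict Implicit. Unset Printing Implicit Defensive.
Local Open Scope ring_scope.

(* Write i = r P + Q with P, Q < r; the middle layer holds P and Q in unary
   code, [p <= P] for p < r and [q <= Q] for q < r.  The key device is that a
   threshold unit fed the unary code of P can compare against an arbitrary value
   c P: with weights c p - c (p - 1) the weighted sum telescopes to c P.
   Encoder: since a . x^i is strictly increasing in i, thresholding a . x at
   a . x^(r p) yields [r p <= i] = [p <= P]; then a . x^i - a . x^(r P + q) >= 0,
   a telescoping lookup against the code of P, yields [q <= Q].
   Decoder: unit (p, k) adds the lookups [P = p] and x^(r p + Q)_k and fires at
   2; output k is the disjunction over p of the units (p, k). *)

Local Notation iv b := ((nat_of_bool b)%:Z).

Lemma iv_ge1 (b : bool) : (1 <= iv b) = b.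
Proof. by case: b. Qed.

Lemma iv_add_ge2 (b1 b2 : bool) : (2 <= iv b1 + iv b2) = b1 && b2.
Proof. by case: b1; case: b2. Qed.

Definition tlayer h h' (W : 'I_h' -> 'I_h -> int) (theta : 'I_h' -> int) :
  bvec h -> bvec h' :=
  fun u j => threshold_fun (W j) (theta j) u.

Lemma threshold_layer_tlayer h h' (W : 'I_h' -> 'I_h -> int) (theta : 'I_h' -> int) :
  threshold_layer (tlayer W theta).
Proof. by exists W, theta. Qed.

Definition ord_ext h T (f : 'I_h -> T) (d : T) (t : nat) : T :=
  if insub t is Some k then f k else d.

Lemma ord_ext_ord h T (f : 'I_h -> T) (d : T) (k : 'I_h) : ord_ext f d k = f k.
Proof. by rewrite /ord_ext valK. Qed.

Lemma sum_iv_eq (m t : nat) (f : nat -> int) : (t < m)%N ->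
  \sum_(k < m) iv (k == t :> nat) * f k = f t.
Proof.
move=> ltm; rewrite (bigD1 (Ordinal ltm)) //= eqxx mul1r big1 ?addr0 // => k.
by rewrite -val_eqE /=; case: eqP; rewrite ?mul0r.
Qed.

Definition lookup_weight (c : nat -> int) (p : nat) : int :=
  c p - (if p is p'.+1 then c p' else 0).

Lemma sum_lookup_weight (c : nat -> int) (r P : nat) : (P < r)%N ->
  \sum_(p < r) lookup_weight c p * iv (p <= P)%N = c P.
Proof.
move=> ltPr; pose c0 t := if t is t'.+1 then c t' else 0.
rewrite -(big_mkord xpredT (fun p => lookup_weight c p * iv (p <= P)%N)).
rewrite (big_cat_nat _ (n := P.+1)) //=.
have -> : \sum_(P.+1 <= p < r) lookup_weight c p * iv (p <= P)%N = 0.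
  by rewrite big_nat_cond big1 // => p /andP[/andP[ltPp _] _]; rewrite leqNgt ltPp mulr0.
rewrite addr0 -[c P]subr0 -[c P]/(c0 P.+1) -[0]/(c0 0%N) -telescope_sumr //.
by apply: eq_big_nat => p /andP[_]; rewrite ltnS => ->; rewrite mulr1.
Qed.

Lemma bdot_lt_sum_norm h (w : 'I_h -> int) (u : bvec h) :
  bdot w u < \sum_k `|w k| + 1.
Proof.
rewrite ltzD1 /bdot ler_sum // => k _.
by case: (u k); rewrite ?mulr1 ?ler_norm // mulr0 normr_ge0.
Qed.

Lemma eq_divmodn (D j P k : nat) : (k < D)%N ->
  ((j %% D == k) && (j %/ D == P))%N = (j == P * D + k)%N.
Proof.
move=> ltkD; have D_gt0 : (0 < D)%N by apply: leq_ltn_trans ltkD.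
apply/andP/eqP => [[/eqP <- /eqP <-]|->]; first by rewrite -divn_eq.
by rewrite modnMDl modn_small // divnMDl // divn_small // addn0.
Qed.

Section Autoencoder.

Variables (n D r : nat) (x : 'I_n -> bvec D) (a : 'I_D -> int).
Hypothesis r_gt0 : (0 < r)%N.
Hypothesis n_le_r2 : (n <= r ^ 2)%N.
Hypothesis x_sorted :
  forall i j : 'I_n, (i < j)%N -> bdot a (x i) < bdot a (x j).

Definition xbit (t k : nat) : bool := ord_ext (fun i => ord_ext (x i) false k) false t.

Lemma xbit_ord (i : 'I_n) (k : 'I_D) : xbit i k = x i k.
Proof. by rewrite /xbit !ord_ext_ord. Qed.

(* Past the last index, [level] exceeds every value of [bdot a], so that
   [level_le] also holds for t >= n. *)
Definition level (t : nat) : int :=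
  ord_ext (fun i => bdot a (x i)) (\sum_k `|a k| + 1) t.

Lemma level_le (i : 'I_n) (t : nat) : (level t <= bdot a (x i)) = (t <= i)%N.
Proof.
rewrite /level /ord_ext; case: insubP => [j _ <-|t_ge_n].
  exact: (le_mono x_sorted).
rewrite leNgt bdot_lt_sum_norm; apply/esym/negbTE.
by rewrite -ltnNge (leq_trans (ltn_ord i)) // leqNgt.
Qed.

Lemma div_lt_r (i : 'I_n) : (i %/ r < r)%N.
Proof. by rewrite ltn_divLR // (leq_trans (ltn_ord i)) // -mulnn. Qed.

Definition enc_hidden : bvec D -> bvec (r + D) :=
  tlayer (fun j => if (j < r)%N then a else fun k => iv (k == (j - r)%N :> nat))
         (fun j => if (j < r)%N then level (r * j)%N else 1).

Definition hidden_code (i j : nat) : bool :=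
  if (j < r)%N then (r * j <= i)%N else xbit i (j - r)%N.

Lemma enc_hidden_x (i : 'I_n) (j : 'I_(r + D)) : enc_hidden (x i) j = hidden_code i j.
Proof.
rewrite /enc_hidden /tlayer /threshold_fun /hidden_code; case: ifP => ltjr.
  by rewrite level_le.
rewrite /bdot; under eq_bigr => k _ do rewrite -xbit_ord.
by rewrite (sum_iv_eq (fun k => iv (xbit i k))) ?iv_ge1 // ltn_subLR // leqNgt ltjr.
Qed.

Definition enc_code : bvec (r + D) -> bvec (2 * r) :=
  tlayer (fun m j => if (m < r)%N then iv (j == m :> nat)
                     else if (j < r)%N then - lookup_weight (fun p => level (r * p + (m - r))%N) j
                     else ord_ext a 0 (j - r)%N)
         (fun m => if (m < r)%N then 1 else 0).

Definition middle_code (P Q m : nat) : bool :=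
  if (m < r)%N then (m <= P)%N else (m - r <= Q)%N.

Lemma encode_x (i : 'I_n) (m : 'I_(2 * r)) :
  enc_code (enc_hidden (x i)) m = middle_code (i %/ r) (i %% r) m.
Proof.
rewrite /enc_code /tlayer /threshold_fun /middle_code /bdot.
under eq_bigr => j _ do rewrite enc_hidden_x.
case: ifP => ltmr.
  rewrite (sum_iv_eq (fun j => iv (hidden_code i j))) ?iv_ge1; last first.
    by rewrite (leq_trans ltmr) // leq_addr.
  by rewrite /hidden_code ltmr leq_divRL // mulnC.
rewrite big_split_ord /= /hidden_code.
under eq_bigr => p _ do rewrite ltn_ord [(r * _)%N]mulnC -leq_divRL // mulNr.
under [X in _ + X]eq_bigr => k _ do rewrite ltnNge leq_addr /= addKn ord_ext_ord xbit_ord.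
rewrite sumrN sum_lookup_weight ?div_lt_r // addrC subr_ge0 level_le.
by rewrite {2}(divn_eq i r) mulnC leq_add2l.
Qed.

Definition dec_hidden : bvec (2 * r) -> bvec (r * D) :=
  tlayer (fun j m => if (m < r)%N then lookup_weight (fun t => iv (t == j %/ D)%N) m
                     else lookup_weight (fun q => iv (xbit (r * (j %/ D) + q) (j %% D))%N) (m - r)%N)
         (fun _ => 2).

Lemma dec_hidden_middle_code (P Q : nat) (u : bvec (2 * r)) :
  (P < r)%N -> (Q < r)%N -> (forall m, u m = middle_code P Q m) ->
  forall j, dec_hidden u j = (j %/ D == P)%N && xbit (r * P + Q) (j %% D)%N.
Proof.
move=> ltPr ltQr uE j; rewrite /dec_hidden /tlayer /threshold_fun /bdot.
under eq_bigr => m _ do rewrite uE.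
rewrite mul2n -addnn big_split_ord /= /middle_code.
under eq_bigr => p _ do rewrite ltn_ord.
under [X in _ + X]eq_bigr => q _ do rewrite ltnNge leq_addr /= addKn.
rewrite !sum_lookup_weight // iv_add_ge2 eq_sym.
by case: eqP => // ->.
Qed.

Definition dec_out : bvec (r * D) -> bvec D :=
  tlayer (fun k j => iv (j %% D == k :> nat)%N) (fun _ => 1).

Lemma decode_middle_code (P Q : nat) (u : bvec (2 * r)) :
  (P < r)%N -> (Q < r)%N -> (forall m, u m = middle_code P Q m) ->
  forall k : 'I_D, dec_out (dec_hidden u) k = xbit (r * P + Q)%N k.
Proof.
move=> ltPr ltQr uE k; rewrite /dec_out /tlayer /threshold_fun /bdot.
have selectE (j : nat) : iv (j %% D == k)%N * iv ((j %/ D == P) && xbit (r * P + Q) (j %% D))%N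
    = iv (j == P * D + k)%N * iv (xbit (r * P + Q)%N k).
  rewrite -eq_divmodn //; case: eqP => [->|]; last by rewrite !mul0r.
  by case: (_ == _).
under eq_bigr => j _ do rewrite (dec_hidden_middle_code ltPr ltQr uE) selectE.
rewrite (sum_iv_eq (fun=> iv (xbit (r * P + Q)%N k))) ?iv_ge1 //.
apply: (@leq_trans (P.+1 * D)); last exact: leq_mul ltPr (leqnn D).
by rewrite mulSn addnC ltn_add2r.
Qed.

End Autoencoder.

Theorem theorem19 (n D r : nat) (x : 'I_n -> bvec D) :
  (1 <= n)%N -> (1 <= D)%N ->
  (* r = ceil(sqrt n) : the unique natural with (r-1)^2 < n <= r^2 *)
  ((r.-1) ^ 2 < n <= r ^ 2)%N ->
  (* pairwise distinct vectors *)
  (forall i j : 'I_n, (forall k, x i k = x j k) -> i = j) ->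
  (* indexed in increasing order of a . x^i for some integer vector a *)
  (exists a : 'I_D -> int, forall i j : 'I_n, (i < j)%N -> (bdot a (x i) < bdot a (x j))%R) ->
  (* five-layer threshold network with sizes D, r+D, 2r, rD, D, middle layer 3 *)
  exists (F1 : bvec D -> bvec (r + D)) (F2 : bvec (r + D) -> bvec (2 * r))
         (F3 : bvec (2 * r) -> bvec (r * D)) (F4 : bvec (r * D) -> bvec D),
    [/\ threshold_layer F1, threshold_layer F2, threshold_layer F3,
        threshold_layer F4 &
        (* perfect autoencoder: decoder (F4 o F3) after encoder (F2 o F1) *)
        forall (i : 'I_n) (k : 'I_D), F4 (F3 (F2 (F1 (x i)))) k = x i k].
Proof.
move=> n_gt0 _ /andP[_ n_le_r2] _ [a x_sorted].
have r_gt0 : (0 < r)%N by case: r n_le_r2 => // /(leq_trans n_gt0).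
exists (enc_hidden x a), (enc_code x a), (dec_hidden x), (@dec_out D r).
split; try exact: threshold_layer_tlayer.
move=> i k; have lt_div := div_lt_r r_gt0 n_le_r2 i.
rewrite (decode_middle_code x lt_div (ltn_pmod i r_gt0)) => [|m].
  by rewrite mulnC -divn_eq xbit_ord.
exact: encode_x.
Qed.
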